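(* Let $\{i_1,i_2\}=\{1,2\}$. (i) $[\mathfrak X^{(i_1)}_{i_1\otimes i_2},\mathfrak X^{(i_2)}_{i_1\otimes i_2}]\subset\mathfrak X^{(i_1)}_{i_1\otimes i_2}$. (ii) As vector spaces, $\mathfrak X=\mathfrak X^{(i_1)}_{i_1\otimes i_2}\oplus\mathfrak X^{(i_2)}_{i_1\otimes i_2}$ and $\mathcal U(\mathfrak X)=\mathcal U(\mathfrak X^{(i_1)}_{i_1\otimes i_2})\otimes\mathcal U(\mathfrak X^{(i_2)}_{i_1\otimes i_2})$ (via multiplication). In particular the set $\{W_1W_2\mid W_1\in\mathcal W(\mathfrak X^{(i_1)}_{i_1\otimes i_2}),\ W_2\in\mathcal W(\mathfrak X^{(i_2)}_{i_1\otimes i_2})\}$ is a basis of $\mathcal U(\mathfrak X)$.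
   Context: $\mathfrak X$ is the complex Lie algebra generated by $Z_1,Z_{11},Z_2,Z_{22},Z_{12}$ subject only to the relations $[Z_1,Z_2]=[Z_{11},Z_2]=[Z_1,Z_{22}]=0$ and $[Z_{11},Z_{22}]=-[Z_{11},Z_{12}]=[Z_{22},Z_{12}]=-[Z_1-Z_2,Z_{12}]$ (the infinitesimal pure braid Lie algebra of $\mathcal M_{0,5}$ in cubic coordinates); $\mathcal U(\cdot)$ denotes universal enveloping algebra. $\mathfrak X^{(1)}_{1\otimes2}$, $\mathfrak X^{(2)}_{1\otimes2}$, $\mathfrak X^{(2)}_{2\otimes1}$, $\mathfrak X^{(1)}_{2\otimes1}$ are the Lie subalgebras of $\mathfrak X$ generated by $\{Z_1,Z_{11},Z_{12}\}$, $\{Z_2,Z_{22}\}$, $\{Z_2,Z_{22},Z_{12}\}$, $\{Z_1,Z_{11}\}$ respectively; they are free Lie algebras on these generators. For such a subalgebra $\mathfrak A$, $\mathcal W(\mathfrak A)$ denotes the set of words (noncommutative monomials, including the empty word $\mathbf I$) in its generators, viewed in $\mathcal U(\mathfrak X)$. *)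

From mathcomp Require Import all_boot all_algebra.
From mathcomp Require Import Rstruct complex.
From mathcomp.multinomials Require Export monalg.
Import GRing.Theory.
Set Implicit Arguments.
Unset Strict Implicit.
Unset Printing Implicit Defensive.
Local Open Scope ring_scope.

Definition CC : fieldType := Rdefinitions.R[i].

Definition iZ1  : 'I_5 := inord 0.
Definition iZ11 : 'I_5 := inord 1.
Definition iZ2  : 'I_5 := inord 2.
Definition iZ22 : 'I_5 := inord 3.
Definition iZ12 : 'I_5 := inord 4.

(* Free associative C-algebra on the five generators (noncommutative
   polynomials): monoid algebra of the free monoid of words. *)
Definition FreeAlg := {malg CC[fmonom 'I_5]}.

Definition word (w : seq 'I_5) : FreeAlg := << FMonom w >>.
Definition Z (i : 'I_5) : FreeAlg := word [:: i].

Definition br (x y : FreeAlg) : FreeAlg := x * y - y * x.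

(* Defining relations of the Lie algebra X, written as relators r = 0:
   [Z1,Z2]=[Z11,Z2]=[Z1,Z22]=0 and
   [Z11,Z22] = -[Z11,Z12] = [Z22,Z12] = -[Z1-Z2,Z12]. *)
Definition relators : seq FreeAlg :=
  [:: br (Z iZ1) (Z iZ2);
      br (Z iZ11) (Z iZ2);
      br (Z iZ1) (Z iZ22);
      br (Z iZ11) (Z iZ22) - br (Z iZ22) (Z iZ12);
      br (Z iZ11) (Z iZ12) + br (Z iZ22) (Z iZ12);
      br (Z iZ22) (Z iZ12) + br (Z iZ1 - Z iZ2) (Z iZ12)].

(* Two-sided ideal of FreeAlg generated by the relators.
   U(X) = FreeAlg / relIdeal  (universal enveloping algebra of a
   finitely presented Lie algebra). *)
Inductive relIdeal : FreeAlg -> Prop :=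
  | relIdeal_gen (r a b : FreeAlg) : r \in relators -> relIdeal (a * r * b)
  | relIdeal_0 : relIdeal 0
  | relIdeal_add (x y : FreeAlg) : relIdeal x -> relIdeal y -> relIdeal (x + y)
  | relIdeal_scale (c : CC) (x : FreeAlg) : relIdeal x -> relIdeal (c *: x).

Definition eqU (x y : FreeAlg) : Prop := relIdeal (x - y).

Inductive lieGen (S : pred 'I_5) : FreeAlg -> Prop :=
  | lieGen_gen (i : 'I_5) : S i -> lieGen S (Z i)
  | lieGen_0 : lieGen S 0
  | lieGen_add (x y : FreeAlg) : lieGen S x -> lieGen S y -> lieGen S (x + y)
  | lieGen_scale (c : CC) (x : FreeAlg) : lieGen S x -> lieGen S (c *: x)
  | lieGen_br (x y : FreeAlg) : lieGen S x -> lieGen S y -> lieGen S (br x y).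

(* u (a representative of an element of U(X)) lies in the Lie subalgebra of
   X generated by {Z_i | i in S}, where X is identified with its (injective,
   by PBW) image in U(X), i.e. the Lie subalgebra of U(X) generated by all
   Z_i. *)
Definition inLie (S : pred 'I_5) (u : FreeAlg) : Prop :=
  exists x, lieGen S x /\ eqU u x.

Definition genSet (k i1 i2 : nat) : pred 'I_5 :=
  match k, i1, i2 with
  | 1, 1, 2 => fun i => i \in [:: iZ1; iZ11; iZ12]
  | 2, 1, 2 => fun i => i \in [:: iZ2; iZ22]
  | 2, 2, 1 => fun i => i \in [:: iZ2; iZ22; iZ12]
  | 1, 2, 1 => fun i => i \in [:: iZ1; iZ11]
  | _, _, _ => pred0
  end%N.

Definition isWord (S : pred 'I_5) (w : seq 'I_5) : bool := all S w.

(* Let A and B be the two generating sets of the statement (A = {Z1, Z11, Z12},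
   B = {Z2, Z22}, or the reverse).  The relations say exactly that [Z_b, Z_a] is an
   element delta(b, a) of Lie(A) for a in A and b in B, and impose no relation among
   the B-generators.  Let the free algebra act on itself: an A-letter acts by left
   multiplication, and a B-letter b sends a word u v, with u the longest prefix of
   A-letters, to u b v + [b, u] v, where [b, u] is expanded by the Leibniz rule with
   [b, a] := delta(b, a).  Every relator acts by zero, so this is a representation of
   U(X).  Hence x |-> x.1 is defined on U(X), it fixes the normal words u v (u an
   A-word, v a B-word), and x is congruent to x.1, a combination of normal words: the
   products W1 W2 form a basis.  The two Lie subalgebras meet in zero: if a in Lie(A)
   and b in Lie(B) of the free algebra are congruent, then a = a.1 = b.1 = b, a
   combination of A-words that is also one of B-words.  The ideal property follows
   from [Z_b, Z_a] in Lie(A) and the Jacobi identity, and the decomposition of X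
   from the ideal property. *)

From HB Require Import structures.
From mathcomp Require Import all_boot all_algebra.
From mathcomp Require Import Rstruct complex.
From mathcomp.multinomials Require Import monalg.
Import GRing.Theory.
Local Open Scope ring_scope.

Set Implicit Arguments.
Unset Strict Implicit.
Unset Printing Implicit Defensive.

(* Proves an identity between sums of signed terms of an abelian group by cancelling
   each term against its opposite. *)
Ltac cancel_terms :=
  apply/eqP; rewrite -subr_eq0; apply/eqP;
  rewrite ?(opprD, opprB, opprK, oppr0, addr0, add0r) -[LHS]addr0 ?addrA -?addrA;
  repeat match goal with
  | |- context [ - ?t ] =>
      repeat progress rewrite (addrCA _ t);
      repeat progress rewrite (addrCA _ (- t)); rewrite addKr
  end;
  rewrite ?addr0 ?add0r.

Lemma scalable_on_span (R : pzRingType) (V U : lmodType R) (T : Type) (e : T -> V)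
    (f : {additive V -> U}) (g : T -> U) :
  (forall P : V -> Prop, P 0 -> (forall x y, P x -> P y -> P (x + y)) ->
    (forall c t, P (c *: e t)) -> forall x, P x) ->
  (forall c t, f (c *: e t) = c *: g t) -> scalable f.
Proof.
move=> span fe c; elim/span => [|x y Ex Ey|d t]; first by rewrite scaler0 raddf0 scaler0.
  by rewrite scalerDr !raddfD Ex Ey.
by rewrite scalerA !fe scalerA.
Qed.

Section LieBracket.
Variables (F : comNzRingType) (A : algType F).
Implicit Types (x y z : A) (c : F).

Definition lie_br x y := x * y - y * x.

Lemma lie_br_antisym x y : lie_br y x = - lie_br x y.
Proof. by rewrite /lie_br opprB. Qed.

Lemma lie_brDl x y z : lie_br (x + y) z = lie_br x z + lie_br y z.
Proof. by rewrite /lie_br mulrDl mulrDr opprD addrACA. Qed.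

Lemma lie_brDr x y z : lie_br z (x + y) = lie_br z x + lie_br z y.
Proof. by rewrite /lie_br mulrDl mulrDr opprD addrACA. Qed.

Lemma lie_brBl x y z : lie_br (x - y) z = lie_br x z - lie_br y z.
Proof. by rewrite /lie_br mulrBl mulrBr; cancel_terms. Qed.

Lemma lie_brZl c x y : lie_br (c *: x) y = c *: lie_br x y.
Proof. by rewrite /lie_br -scalerAl -scalerAr scalerBr. Qed.

Lemma lie_brZr c x y : lie_br y (c *: x) = c *: lie_br y x.
Proof. by rewrite /lie_br -scalerAl -scalerAr scalerBr. Qed.

Lemma lie_br0l x : lie_br 0 x = 0.
Proof. by rewrite /lie_br mul0r mulr0 subrr. Qed.

Lemma lie_br0r x : lie_br x 0 = 0.
Proof. by rewrite /lie_br mul0r mulr0 subrr. Qed.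

Lemma lie_br_jacobi x y z :
  lie_br (lie_br x y) z = lie_br x (lie_br y z) - lie_br y (lie_br x z).
Proof. by rewrite /lie_br !(mulrBl, mulrBr) !mulrA; cancel_terms. Qed.

Lemma lie_br_jacobi_r x y z :
  lie_br x (lie_br y z) = lie_br (lie_br x y) z - lie_br (lie_br x z) y.
Proof. by rewrite /lie_br !(mulrBl, mulrBr) !mulrA; cancel_terms. Qed.

Variable rels : seq A.

Inductive ideal_gen : A -> Prop :=
  | ideal_gen_rel r a b : r \in rels -> ideal_gen (a * r * b)
  | ideal_gen0 : ideal_gen 0
  | ideal_genD x y : ideal_gen x -> ideal_gen y -> ideal_gen (x + y)
  | ideal_genZ c x : ideal_gen x -> ideal_gen (c *: x).

Definition eq_mod x y := ideal_gen (x - y).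

Lemma ideal_genN x : ideal_gen x -> ideal_gen (- x).
Proof. by rewrite -scaleN1r; apply: ideal_genZ. Qed.

Lemma ideal_genB x y : ideal_gen x -> ideal_gen y -> ideal_gen (x - y).
Proof. by move=> Ix /ideal_genN; apply: ideal_genD. Qed.

Lemma ideal_genMl y x : ideal_gen x -> ideal_gen (y * x).
Proof.
elim=> [r a b rel_r | | {}x z _ Ix _ Iz | c {}x _ Ix].
- by rewrite !mulrA; apply: ideal_gen_rel.
- by rewrite mulr0; apply: ideal_gen0.
- by rewrite mulrDr; apply: ideal_genD.
- by rewrite -scalerAr; apply: ideal_genZ.
Qed.

Lemma ideal_genMr y x : ideal_gen x -> ideal_gen (x * y).
Proof.
elim=> [r a b rel_r | | {}x z _ Ix _ Iz | c {}x _ Ix].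
- by rewrite -!mulrA mulrA; apply: ideal_gen_rel.
- by rewrite mul0r; apply: ideal_gen0.
- by rewrite mulrDl; apply: ideal_genD.
- by rewrite -scalerAl; apply: ideal_genZ.
Qed.

Lemma ideal_gen_eq x y : ideal_gen x -> x = y -> ideal_gen y.
Proof. by move=> Ix <-. Qed.

Lemma ideal_gen_relator r : r \in rels -> ideal_gen r.
Proof. by move=> rel_r; have := ideal_gen_rel 1 1 rel_r; rewrite mul1r mulr1. Qed.

Lemma eq_mod_refl x : eq_mod x x.
Proof. by rewrite /eq_mod subrr; apply: ideal_gen0. Qed.

Lemma eq_mod_sym x y : eq_mod x y -> eq_mod y x.
Proof. by move=> /ideal_genN; rewrite opprB. Qed.

Lemma eq_mod_trans y x z : eq_mod x y -> eq_mod y z -> eq_mod x z.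
Proof. by move=> Ixy /(ideal_genD Ixy); rewrite addrA subrK. Qed.

Lemma eq_modD x1 x2 y1 y2 : eq_mod x1 x2 -> eq_mod y1 y2 -> eq_mod (x1 + y1) (x2 + y2).
Proof. by move=> I1 /(ideal_genD I1); rewrite /eq_mod opprD addrACA. Qed.

Lemma eq_modZ c x y : eq_mod x y -> eq_mod (c *: x) (c *: y).
Proof. by rewrite /eq_mod -scalerBr; apply: ideal_genZ. Qed.

Lemma eq_modN x y : eq_mod x y -> eq_mod (- x) (- y).
Proof. by move=> /ideal_genN; rewrite /eq_mod opprB opprK addrC. Qed.

Lemma eq_modM x1 x2 y1 y2 : eq_mod x1 x2 -> eq_mod y1 y2 -> eq_mod (x1 * y1) (x2 * y2).
Proof.
move=> /(ideal_genMr y1) I1 /(ideal_genMl x2) /(ideal_genD I1).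
by rewrite /eq_mod mulrBl mulrBr addrA subrK.
Qed.

Lemma eq_mod_br x1 x2 y1 y2 :
  eq_mod x1 x2 -> eq_mod y1 y2 -> eq_mod (lie_br x1 y1) (lie_br x2 y2).
Proof. by move=> E1 E2; apply/eq_modD/eq_modN; apply: eq_modM. Qed.

Section LieClosure.
Variables (I : Type) (g : I -> A) (S : pred I).

Inductive lie_gen : A -> Prop :=
  | lie_gen_gen i : S i -> lie_gen (g i)
  | lie_gen0 : lie_gen 0
  | lie_genD x y : lie_gen x -> lie_gen y -> lie_gen (x + y)
  | lie_genZ c x : lie_gen x -> lie_gen (c *: x)
  | lie_gen_br x y : lie_gen x -> lie_gen y -> lie_gen (lie_br x y).

Definition in_lie x := exists y, lie_gen y /\ eq_mod x y.

Lemma lie_genN x : lie_gen x -> lie_gen (- x).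
Proof. by rewrite -scaleN1r; apply: lie_genZ. Qed.

Lemma lie_genB x y : lie_gen x -> lie_gen y -> lie_gen (x - y).
Proof. by move=> Sx /lie_genN; apply: lie_genD. Qed.

Lemma in_lie_gen x : lie_gen x -> in_lie x.
Proof. by move=> Sx; exists x; split => //; apply: eq_mod_refl. Qed.

Lemma in_lie_eq_mod x y : eq_mod x y -> in_lie y -> in_lie x.
Proof. by move=> Exy [z [Sz Eyz]]; exists z; split => //; apply: eq_mod_trans Eyz. Qed.

Lemma in_lie0 : in_lie 0.
Proof. exact/in_lie_gen/lie_gen0. Qed.

Lemma in_lieD x y : in_lie x -> in_lie y -> in_lie (x + y).
Proof.
move=> [a [Sa Exa]] [b [Sb Eyb]]; exists (a + b).
by split; [apply: lie_genD | apply: eq_modD].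
Qed.

Lemma in_lieZ c x : in_lie x -> in_lie (c *: x).
Proof. by move=> [a [Sa Exa]]; exists (c *: a); split; [apply: lie_genZ | apply: eq_modZ]. Qed.

Lemma in_lieN x : in_lie x -> in_lie (- x).
Proof. by rewrite -scaleN1r; apply: in_lieZ. Qed.

Lemma in_lieB x y : in_lie x -> in_lie y -> in_lie (x - y).
Proof. by move=> Sx /in_lieN; apply: in_lieD. Qed.

Lemma in_lie_br x y : in_lie x -> in_lie y -> in_lie (lie_br x y).
Proof.
move=> [a [Sa Exa]] [b [Sb Eyb]]; exists (lie_br a b).
by split; [apply: lie_gen_br | apply: eq_mod_br].
Qed.
End LieClosure.
End LieBracket.

Section WordBasis.
Variables (F : comNzRingType) (I : eqType) (A : algType F).
Variable W : seq I -> A.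
Hypothesis W_cat : forall u w, W (u ++ w) = W u * W w.
Hypothesis W_nil : W [::] = 1.
Hypothesis W_ind : forall P : A -> Prop, P 0 -> (forall x y, P x -> P y -> P (x + y)) ->
  (forall c w, P (c *: W w)) -> forall x, P x.
Variable lift : (seq I -> A) -> {linear A -> A}.
Hypothesis liftW : forall h w, lift h (W w) = h w.
Variable coord : seq I -> {scalar A}.
Hypothesis coordW : forall w w', coord w (W w') = (w' == w)%:R.

Implicit Types (x y v : A) (c : F) (u w : seq I) (P Q : pred (seq I)).

Definition gen i := W [:: i].

Lemma W_cons i w : W (i :: w) = gen i * W w.
Proof. by rewrite -W_cat. Qed.

Lemma lift_W x : lift W x = x.
Proof.
elim/W_ind: x => [|x y Ex Ey|c w]; first exact: linear0.
  by rewrite linearD Ex Ey.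
by rewrite linearZ liftW.
Qed.

Lemma lift_zero x : lift (fun=> 0) x = 0.
Proof.
elim/W_ind: x => [|x y Ex Ey|c w]; first exact: linear0.
  by rewrite linearD Ex Ey addr0.
by rewrite linearZ liftW /= scaler0.
Qed.

Lemma W_free (s : seq (seq I)) (a : seq I -> F) :
  uniq s -> \sum_(w <- s) a w *: W w = 0 -> forall w, w \in s -> a w = 0.
Proof.
move=> Us E w sw; have := congr1 (coord w) E.
rewrite linear_sum linear0 (bigD1_seq w) //= scalarZ coordW eqxx mulr1.
rewrite big1 ?addr0 // => w' /negbTE w'w.
by rewrite scalarZ coordW w'w mulr0.
Qed.

Definition spanned P x :=
  exists s : seq (F * seq I), all (fun t => P t.2) s /\ x = \sum_(t <- s) t.1 *: W t.2.

Lemma spanned0 P : spanned P 0.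
Proof. by exists [::]; rewrite big_nil. Qed.

Lemma spannedD P x y : spanned P x -> spanned P y -> spanned P (x + y).
Proof.
move=> [s1 [P1 ->]] [s2 [P2 ->]]; exists (s1 ++ s2).
by rewrite all_cat P1 P2 big_cat.
Qed.

Lemma spannedZ P c x : spanned P x -> spanned P (c *: x).
Proof.
move=> [s [Ps ->]]; exists [seq (c * t.1, t.2) | t <- s]; rewrite all_map.
by split=> //; rewrite big_map scaler_sumr; apply: eq_bigr => t _; rewrite scalerA.
Qed.

Lemma spannedB P x y : spanned P x -> spanned P y -> spanned P (x - y).
Proof. by move=> Px /(spannedZ (-1)); rewrite scaleN1r; apply: spannedD. Qed.

Lemma spanned_W P c w : P w -> spanned P (c *: W w).
Proof. by move=> Pw; exists [:: (c, w)]; rewrite /= Pw big_seq1. Qed.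

Lemma spanned_sum P (T : Type) (s : seq T) (C : pred T) (G : T -> A) :
  (forall t, C t -> spanned P (G t)) -> spanned P (\sum_(t <- s | C t) G t).
Proof. by move=> PG; elim/big_ind: _ => //; [apply: spanned0 | apply: spannedD]. Qed.

Lemma spanned_sub P Q x : {subset P <= Q} -> spanned P x -> spanned Q x.
Proof. by move=> PQ [s [Ps ->]]; exists s; split=> //; apply: sub_all Ps => t /PQ. Qed.

Lemma spannedM P Q (R : pred (seq I)) x y :
  (forall u w, P u -> Q w -> R (u ++ w)) -> spanned P x -> spanned Q y -> spanned R (x * y).
Proof.
move=> PQR [s1 [P1 ->]] [s2 [Q2 ->]]; rewrite mulr_suml big_seq.
apply: spanned_sum => t1 /(allP P1) Pt1; rewrite mulr_sumr big_seq.
apply: spanned_sum => t2 /(allP Q2) Qt2.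
by rewrite -scalerAl -scalerAr scalerA -W_cat; apply: spanned_W; apply: PQR.
Qed.

Lemma lift_spanned P Q h x :
  (forall w, P w -> spanned Q (h w)) -> spanned P x -> spanned Q (lift h x).
Proof.
move=> PQ [s [Ps ->]]; rewrite linear_sum big_seq; apply: spanned_sum => t /(allP Ps) Pt.
by rewrite linearZ liftW; apply/spannedZ/PQ.
Qed.

Lemma lift_spanned_eq P h1 h2 x :
  (forall w, P w -> h1 w = h2 w) -> spanned P x -> lift h1 x = lift h2 x.
Proof.
move=> E [s [Ps ->]]; rewrite !linear_sum !big_seq; apply: eq_bigr => t /(allP Ps) Pt.
by rewrite !linearZ !liftW E.
Qed.

Lemma spannedT x : spanned predT x.
Proof.
elim/W_ind: x => [|x y|c w]; [exact: spanned0 | exact: spannedD | exact: spanned_W].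
Qed.

Lemma lift_spanned_id P h x : (forall w, P w -> h w = W w) -> spanned P x -> lift h x = x.
Proof. by move=> hW /(lift_spanned_eq hW) ->; apply: lift_W. Qed.

Lemma lift_spanned_zero P h x : (forall w, P w -> h w = 0) -> spanned P x -> lift h x = 0.
Proof. by move=> h0 /(lift_spanned_eq h0) ->; apply: lift_zero. Qed.

Lemma lie_gen_spanned (S : pred I) x :
  lie_gen gen S x -> spanned (fun w => (w != [::]) && all S w) x.
Proof.
have cat_nonempty u w : (u != [::]) && all S u -> (w != [::]) && all S w ->
    (u ++ w != [::]) && all S (u ++ w).
  by case: u => //= a u /andP [-> Su] /andP [_ Sw]; rewrite all_cat Su Sw.
elim=> [i Si | | {}x y _ Sx _ Sy | c {}x _ Sx | {}x y _ Sx _ Sy].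
- by rewrite -[gen i]scale1r; apply: spanned_W; rewrite /= Si.
- exact: spanned0.
- exact: spannedD.
- exact: spannedZ.
- by apply: spannedB; apply: spannedM cat_nonempty _ _.
Qed.

Section Splitting.
Variables (rels : seq A) (inA inB : pred I).
Hypothesis inBE : inB =1 predC inA.
Variable delta : I -> I -> A.
Hypothesis delta_lie : forall a b, inA a -> inB b -> lie_gen gen inA (delta b a).
Hypothesis br_BA :
  forall a b, inA a -> inB b -> eq_mod rels (lie_br (gen b) (gen a)) (delta b a).

Lemma negb_inB i : ~~ inB i = inA i.
Proof. by rewrite inBE negbK. Qed.

Definition prefA w := take (find inB w) w.
Definition suffA w := drop (find inB w) w.
Definition normal w := all inB (suffA w).

Lemma W_prefA_suffA w : W w = W (prefA w) * W (suffA w).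
Proof. by rewrite -W_cat cat_take_drop. Qed.

Lemma all_prefA w : all inA (prefA w).
Proof.
by elim: w => //= i w; rewrite /prefA /=; case: ifP => //= /negbT; rewrite negb_inB => ->.
Qed.

Lemma prefA_cons a w : inA a -> prefA (a :: w) = a :: prefA w /\ suffA (a :: w) = suffA w.
Proof. by rewrite -negb_inB /prefA /suffA /= => /negbTE ->. Qed.

Lemma prefA_cat (u v : seq I) :
  all inA u -> all inB v -> prefA (u ++ v) = u /\ suffA (u ++ v) = v.
Proof.
move=> Au Bv; rewrite /prefA /suffA; have -> : find inB (u ++ v) = size u.
  rewrite find_cat (_ : has inB u = false); last first.
    by apply/negbTE/hasPn => i /(allP Au); rewrite -negb_inB.
  by case: v Bv => [|b v] /=; [rewrite addn0 | case/andP => ->; rewrite addn0].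
by rewrite take_size_cat ?drop_size_cat.
Qed.

Lemma normal_cat (u v : seq I) : all inA u -> all inB v -> normal (u ++ v).
Proof. by move=> Au Bv; rewrite /normal (prefA_cat Au Bv).2. Qed.

Fixpoint ad_word (b : I) (u : seq I) : A :=
  if u is a :: u' then delta b a * W u' + gen a * ad_word b u' else 0.

Lemma ad_word_cons b a u : ad_word b (a :: u) = delta b a * W u + gen a * ad_word b u.
Proof. by []. Qed.

Lemma ad_word_spanned b u : inB b -> all inA u -> spanned (all inA) (ad_word b u).
Proof.
have catA u1 u2 : all inA u1 -> all inA u2 -> all inA (u1 ++ u2) by rewrite all_cat => -> ->.
move=> Bb; elim: u => [|a u IH] /=; first by move=> _; apply: spanned0.
case/andP => Aa Au; apply: spannedD; apply: spannedM catA _ _.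
- by apply: spanned_sub (lie_gen_spanned (delta_lie Aa Bb)) => w /andP [].
- by rewrite -[W u]scale1r; apply: spanned_W.
- by rewrite -[gen a]scale1r; apply: spanned_W; rewrite /= Aa.
- exact: IH.
Qed.

Lemma ad_word_eq_mod b u : inB b -> all inA u ->
  eq_mod rels (gen b * W u) (W u * gen b + ad_word b u).
Proof.
move=> Bb; elim: u => [|a u IH] /=.
  by move=> _; rewrite W_nil mulr1 mul1r addr0; apply: eq_mod_refl.
case/andP => Aa /IH Eu.
apply: ideal_gen_eq (ideal_genD (ideal_genMr (W u) (br_BA Aa Bb)) (ideal_genMl (gen a) Eu)) _.
by rewrite /lie_br W_cons !(mulrBl, mulrBr, mulrDl, mulrDr) !mulrA; cancel_terms.
Qed.

Definition act_word i w : A :=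
  if inA i then W (i :: w)
  else ad_word i (prefA w) * W (suffA w) + W (prefA w ++ i :: suffA w).

Definition act i := lift (act_word i).
Arguments act : simpl never.

Definition rep x v := lift (foldr act v) x.

Definition nf x := rep x 1.

Lemma foldr_actD w v1 v2 : foldr act (v1 + v2) w = foldr act v1 w + foldr act v2 w.
Proof. by elim: w => //= i w ->; rewrite linearD. Qed.

Lemma foldr_actZ w c v : foldr act (c *: v) w = c *: foldr act v w.
Proof. by elim: w => //= i w ->; rewrite linearZ. Qed.

Lemma foldr_act0 w : foldr act 0 w = 0.
Proof. by elim: w => //= i w ->; rewrite linear0. Qed.

Lemma rep0 v : rep 0 v = 0.
Proof. exact: linear0. Qed.

Lemma repD x y v : rep (x + y) v = rep x v + rep y v.
Proof. exact: linearD. Qed.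

Lemma repZ c x v : rep (c *: x) v = c *: rep x v.
Proof. exact: linearZ. Qed.

Lemma repN x v : rep (- x) v = - rep x v.
Proof. exact: linearN. Qed.

Lemma repB x y v : rep (x - y) v = rep x v - rep y v.
Proof. exact: linearB. Qed.

Lemma rep_W w v : rep (W w) v = foldr act v w.
Proof. exact: liftW. Qed.

Lemma rep_gen i v : rep (gen i) v = act i v.
Proof. exact: liftW. Qed.

Lemma rep_mul x y v : rep (x * y) v = rep x (rep y v).
Proof.
elim/W_ind: x => [|x1 x2 E1 E2|c u]; first by rewrite mul0r !rep0.
  by rewrite mulrDl !repD E1 E2.
rewrite -scalerAl !repZ rep_W; congr (_ *: _).
elim/W_ind: y => [|y1 y2 E1 E2|d w].
- by rewrite mulr0 !rep0 foldr_act0.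
- by rewrite mulrDr !repD E1 E2 foldr_actD.
- by rewrite -scalerAr !repZ -W_cat !rep_W foldr_actZ foldr_cat.
Qed.

Lemma rep_br x y v : rep (lie_br x y) v = rep x (rep y v) - rep y (rep x v).
Proof. by rewrite repB !rep_mul. Qed.

Lemma act_A a v : inA a -> act a v = gen a * v.
Proof.
move=> Aa; elim/W_ind: v => [|x y Ex Ey|c w]; first by rewrite linear0 mulr0.
  by rewrite linearD Ex Ey mulrDr.
by rewrite linearZ liftW /act_word Aa /= W_cons scalerAr.
Qed.

Lemma act_comm a b v : inA a -> inB b ->
  act b (act a v) = act a (act b v) + delta b a * v.
Proof.
move=> Aa Bb; elim/W_ind: v => [|x y Ex Ey|c w].
- by rewrite !linear0 mulr0 addr0.
- by rewrite !linearD Ex Ey mulrDr addrACA.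
rewrite !linearZ -scalerAr -scalerDr; congr (_ *: _).
have nAb : ~~ inA b by rewrite -negb_inB negbK.
rewrite !(act_A _ Aa) -W_cons !liftW /act_word !(ifN _ _ nAb).
have [-> ->] := prefA_cons w Aa.
rewrite [W w]W_prefA_suffA ad_word_cons !(W_cons, W_cat) !(mulrDl, mulrDr) !mulrA.
by cancel_terms.
Qed.

Lemma rep_br_AA a a' v : inA a -> inA a' ->
  rep (lie_br (gen a) (gen a')) v = lie_br (gen a) (gen a') * v.
Proof. by move=> Aa Aa'; rewrite rep_br !rep_gen !act_A // mulrBl !mulrA. Qed.

Lemma rep_br_BA a b v : inA a -> inB b -> rep (lie_br (gen b) (gen a)) v = delta b a * v.
Proof. by move=> Aa Bb; rewrite rep_br !rep_gen act_comm // addrC addKr. Qed.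

Lemma rep_br_AB a b v : inA a -> inB b -> rep (lie_br (gen a) (gen b)) v = - (delta b a * v).
Proof. by move=> Aa Bb; rewrite lie_br_antisym repN rep_br_BA. Qed.

Lemma act_eq_mod i y : eq_mod rels (gen i * y) (act i y).
Proof.
elim/W_ind: y => [|x y Ex Ey|c w].
- by rewrite mulr0 linear0; apply: eq_mod_refl.
- by rewrite mulrDr linearD; apply: eq_modD.
rewrite -scalerAr linearZ; apply: eq_modZ; rewrite liftW /act_word.
case: ifP => [_|/negbT]; first by rewrite W_cons; apply: eq_mod_refl.
rewrite -negb_inB negbK => Bi.
have Ew := ideal_genMr (W (suffA w)) (ad_word_eq_mod Bi (all_prefA w)).
apply: ideal_gen_eq Ew _.
by rewrite [W w]W_prefA_suffA !(W_cat, W_cons) !(mulrBl, mulrDl) !mulrA; cancel_terms.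
Qed.

Lemma nf_eq_mod x : eq_mod rels x (nf x).
Proof.
elim/W_ind: x => [|x y Ex Ey|c w].
- by rewrite /nf rep0; apply: eq_mod_refl.
- by rewrite /nf repD; apply: eq_modD.
rewrite /nf repZ; apply: eq_modZ; rewrite rep_W.
elim: w => [|i w IH] /=; first by rewrite W_nil; apply: eq_mod_refl.
by rewrite W_cons; apply: eq_mod_trans (act_eq_mod i _); apply: eq_modM IH; apply: eq_mod_refl.
Qed.

Lemma foldr_act_normal (u v : seq I) :
  all inA u -> all inB v -> foldr act 1 (u ++ v) = W (u ++ v).
Proof.
move=> Au Bv; elim: u Au => [_|a u IH /andP [Aa /IH Eu]]; last by rewrite /= Eu act_A // W_cons.
elim: v Bv => [|b v IHv /andP [Bb Bv]] /=; first by rewrite W_nil.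
have nAb : ~~ inA b by rewrite -negb_inB negbK.
rewrite IHv // /act liftW /act_word (ifN _ _ nAb).
by have [-> ->] := prefA_cat (u := [::]) isT Bv; rewrite mul0r add0r.
Qed.

Lemma act_spanned i y : spanned normal y -> spanned normal (act i y).
Proof.
apply: lift_spanned => w Bw; rewrite /act_word; case: ifP => Ai.
  by rewrite -[W _]scale1r; apply: spanned_W; rewrite /normal (prefA_cons w Ai).2.
have Bi : inB i by rewrite inBE /= Ai.
apply: spannedD; last first.
  by rewrite -[W _]scale1r; apply: spanned_W; apply: normal_cat; rewrite ?all_prefA //= Bi.
apply: (spannedM (Q := all inB) normal_cat (ad_word_spanned Bi (all_prefA w))).
by rewrite -[W _]scale1r; apply: spanned_W.
Qed.

Lemma nf_spanned x : spanned normal (nf x).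
Proof.
apply: lift_spanned (spannedT x) => w _.
elim: w => [|i w IH] /=; last exact: act_spanned.
by rewrite -W_nil -[W _]scale1r; apply: spanned_W.
Qed.

Lemma rep_at0 x : rep x 0 = 0.
Proof.
elim/W_ind: x => [|x y Ex Ey|c w]; first exact: rep0.
  by rewrite repD Ex Ey addr0.
by rewrite repZ rep_W foldr_act0 scaler0.
Qed.

Definition splits x :=
  exists a b, [/\ in_lie rels gen inA a, in_lie rels gen inB b & eq_mod rels x (a + b)].

Lemma splits_gen i : splits (gen i).
Proof.
have [Ai | nAi] := boolP (inA i).
  exists (gen i), 0; rewrite addr0.
  by split; [apply/in_lie_gen/lie_gen_gen | apply: in_lie0 | apply: eq_mod_refl].
exists 0, (gen i); rewrite add0r; split; [apply: in_lie0 | | apply: eq_mod_refl].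
by apply/in_lie_gen/lie_gen_gen; rewrite inBE.
Qed.

Lemma splitsD x y : splits x -> splits y -> splits (x + y).
Proof.
move=> [a1 [b1 [A1 B1 E1]]] [a2 [b2 [A2 B2 E2]]]; exists (a1 + a2), (b1 + b2).
by split; [apply: in_lieD | apply: in_lieD | rewrite addrACA; apply: eq_modD].
Qed.

Lemma splitsZ c x : splits x -> splits (c *: x).
Proof.
move=> [a [b [Aa Bb E]]]; exists (c *: a), (c *: b).
by split; [apply: in_lieZ | apply: in_lieZ | rewrite -scalerDr; apply: eq_modZ].
Qed.

Lemma in_lie_br_genB a b : inB b -> lie_gen gen inA a -> in_lie rels gen inA (lie_br a (gen b)).
Proof.
move=> Bb; elim=> [a' Aa' | | y z _ Ey _ Ez | c y _ Ey | y z Ay Ey Az Ez].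
- apply: (in_lie_eq_mod (y := - delta b a')).
    by rewrite lie_br_antisym; apply/eq_modN/br_BA.
  exact/in_lieN/in_lie_gen/delta_lie.
- by rewrite lie_br0l; apply: in_lie0.
- by rewrite lie_brDl; apply: in_lieD.
- by rewrite lie_brZl; apply: in_lieZ.
- by rewrite lie_br_jacobi; apply: in_lieB; apply: in_lie_br => //; apply: in_lie_gen.
Qed.

Theorem lie_br_ideal x y :
  in_lie rels gen inA x -> in_lie rels gen inB y -> in_lie rels gen inA (lie_br x y).
Proof.
move=> Ax [y' [By' Eyy']]; apply: (in_lie_eq_mod (y := lie_br x y')).
  by apply: eq_mod_br Eyy'; apply: eq_mod_refl.
elim: By' x Ax {Eyy'} => [b Bb | | y1 y2 _ E1 _ E2 | c z _ Ez | y1 y2 _ E1 _ E2] x Ax.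
- case: Ax => [a [Aa Exa]]; apply: (in_lie_eq_mod (y := lie_br a (gen b))).
    by apply: eq_mod_br Exa _; apply: eq_mod_refl.
  exact: in_lie_br_genB.
- by rewrite lie_br0r; apply: in_lie0.
- by rewrite lie_brDr; apply: in_lieD; [apply: E1 | apply: E2].
- by rewrite lie_brZr; apply: in_lieZ; apply: Ez.
- by rewrite lie_br_jacobi_r; apply: in_lieB; [apply: E2; apply: E1 | apply: E1; apply: E2].
Qed.

Lemma splits_br x y : splits x -> splits y -> splits (lie_br x y).
Proof.
move=> [a1 [b1 [A1 B1 E1]]] [a2 [b2 [A2 B2 E2]]].
exists (lie_br a1 a2 + lie_br a1 b2 - lie_br a2 b1), (lie_br b1 b2); split.
- apply: in_lieB; last exact: lie_br_ideal.
  by apply: in_lieD; [apply: in_lie_br | apply: lie_br_ideal].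
- exact: in_lie_br.
apply: eq_mod_trans (eq_mod_br E1 E2) _; rewrite lie_brDl !lie_brDr (lie_br_antisym a2 b1).
by rewrite -!addrA; apply: eq_mod_refl.
Qed.

Theorem lie_decomposition x : in_lie rels gen predT x -> splits x.
Proof.
move=> [x' [Tx' Exx']]; suff [a [b [Aa Bb E]]] : splits x'.
  by exists a, b; split=> //; apply: eq_mod_trans E.
elim: Tx' {Exx'} => [i _ | | y z _ Sy _ Sz | c y _ Sy | y z _ Sy _ Sz].
- exact: splits_gen.
- by exists 0, 0; rewrite addr0; split; [apply: in_lie0 | apply: in_lie0 | apply: eq_mod_refl].
- exact: splitsD Sy Sz.
- exact: splitsZ Sy.
- exact: splits_br Sy Sz.
Qed.

Lemma nf_lie_A x : lie_gen gen inA x -> nf x = x.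
Proof.
move/lie_gen_spanned; apply: lift_spanned_id => w /andP [_ Aw].
by rewrite -[w]cats0 foldr_act_normal.
Qed.

Lemma nf_lie_B x : lie_gen gen inB x -> nf x = x.
Proof.
move/lie_gen_spanned; apply: lift_spanned_id => w /andP [_ Bw].
by rewrite -[w]cat0s foldr_act_normal.
Qed.

Theorem normal_span x : exists s : seq (F * (seq I * seq I)),
  all (fun t => all inA t.2.1 && all inB t.2.2) s /\
  eq_mod rels x (\sum_(t <- s) t.1 *: (W t.2.1 * W t.2.2)).
Proof.
have [s [Ns E]] := nf_spanned x.
exists [seq (t.1, (prefA t.2, suffA t.2)) | t <- s]; split.
  by rewrite all_map; apply: sub_all Ns => t /= Nt; rewrite all_prefA.
rewrite big_map; under eq_bigr do rewrite /= -W_prefA_suffA.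
by rewrite -E; apply: nf_eq_mod.
Qed.

Definition enveloping_splits : Prop :=
  [/\ forall x y,
        in_lie rels gen inA x -> in_lie rels gen inB y -> in_lie rels gen inA (lie_br x y),
      forall x, in_lie rels gen predT x -> splits x,
      forall x, in_lie rels gen inA x -> in_lie rels gen inB x -> eq_mod rels x 0,
      forall x, exists s : seq (F * (seq I * seq I)),
        all (fun t => all inA t.2.1 && all inB t.2.2) s /\
        eq_mod rels x (\sum_(t <- s) t.1 *: (W t.2.1 * W t.2.2)) &
      forall (s : seq (seq I * seq I)) (c : seq I * seq I -> F),
        uniq s -> all (fun p => all inA p.1 && all inB p.2) s ->
        eq_mod rels (\sum_(p <- s) c p *: (W p.1 * W p.2)) 0 -> forall p, p \in s -> c p = 0].

Section Relators.
Hypothesis rep_rels : forall r, r \in rels -> forall v, rep r v = 0.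

Lemma nf_ideal x : ideal_gen rels x -> nf x = 0.
Proof.
rewrite /nf; elim=> [r a b rel_r | | y z _ Ey _ Ez | c y _ Ey].
- by rewrite !rep_mul (rep_rels rel_r) rep_at0.
- exact: rep0.
- by rewrite repD Ey Ez addr0.
- by rewrite repZ Ey scaler0.
Qed.

Lemma nf_eq_mod0 x : eq_mod rels x 0 -> nf x = 0.
Proof. by rewrite /eq_mod subr0; apply: nf_ideal. Qed.

Theorem lie_direct x : in_lie rels gen inA x -> in_lie rels gen inB x -> eq_mod rels x 0.
Proof.
move=> [a [Aa Exa]] [b [Bb Exb]]; suff a0 : a = 0 by rewrite a0 in Exa.
have ab : a = b.
  apply/eqP; rewrite -subr_eq0 -(nf_lie_A Aa) -(nf_lie_B Bb) /nf -repB.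
  by rewrite -/(nf _) nf_ideal //; apply: eq_mod_trans (eq_mod_sym Exa) Exb.
pose projA := lift (fun w => if all inA w then W w else 0).
have <- : projA a = a.
  by apply: lift_spanned_id (lie_gen_spanned Aa) => w /andP [_ ->].
rewrite ab; apply: lift_spanned_zero (lie_gen_spanned Bb) => -[|i w] //= /andP [Bi _].
by rewrite -negb_inB Bi.
Qed.

Theorem normal_free (s : seq (seq I * seq I)) (c : seq I * seq I -> F) :
  uniq s -> all (fun p => all inA p.1 && all inB p.2) s ->
  eq_mod rels (\sum_(p <- s) c p *: (W p.1 * W p.2)) 0 -> forall p, p \in s -> c p = 0.
Proof.
move=> Us Ns /nf_eq_mod0; set cat2 := fun p : seq I * seq I => p.1 ++ p.2.
have cat2K p : p \in s -> (prefA (cat2 p), suffA (cat2 p)) = p.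
  by case: p => u v /(allP Ns) /andP [Au Bv]; rewrite /cat2 /=; have [-> ->] := prefA_cat Au Bv.
have -> : nf (\sum_(p <- s) c p *: (W p.1 * W p.2)) =
    \sum_(w <- map cat2 s) c (prefA w, suffA w) *: W w.
  rewrite /nf /rep linear_sum big_map !big_seq; apply: eq_bigr => p sp.
  have /andP [Au Bv] := allP Ns p sp.
  by rewrite linearZ -W_cat liftW foldr_act_normal // cat2K.
move=> /W_free c0 p sp; rewrite -(cat2K p sp); apply: c0; last exact: map_f.
by rewrite (map_inj_in_uniq _) // => q1 q2 /cat2K {2}<- /cat2K {2}<- ->.
Qed.

Theorem enveloping_splitting : enveloping_splits.
Proof.
split; [exact: lie_br_ideal | exact: lie_decomposition | exact: lie_direct |
        exact: normal_span | exact: normal_free].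
Qed.
End Relators.

End Splitting.
End WordBasis.

Lemma iZ_val : (nat_of_ord iZ1 = 0) * (nat_of_ord iZ11 = 1) * (nat_of_ord iZ2 = 2)
  * (nat_of_ord iZ22 = 3) * (nat_of_ord iZ12 = 4).
Proof. by rewrite !inordK. Qed.

Lemma genSet_compl : genSet 2 1 2 =1 predC (genSet 1 1 2) /\ genSet 1 2 1 =1 predC (genSet 2 2 1).
Proof.
by split=> i; rewrite /= !inE -!val_eqE /= !iZ_val; case: i => [[|[|[|[|[|n]]]]] Hi].
Qed.

Section Cases.
Variables (F : comNzRingType) (A : algType F) (W : seq 'I_5 -> A).
Hypothesis W_cat : forall u w, W (u ++ w) = W u * W w.
Hypothesis W_nil : W [::] = 1.
Hypothesis W_ind : forall P : A -> Prop, P 0 -> (forall x y, P x -> P y -> P (x + y)) ->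
  (forall c w, P (c *: W w)) -> forall x, P x.
Variable lift : (seq 'I_5 -> A) -> {linear A -> A}.
Hypothesis liftW : forall h w, lift h (W w) = h w.
Variable coord : seq 'I_5 -> {scalar A}.
Hypothesis coordW : forall w w', coord w (W w') = (w' == w)%:R.

Local Notation g := (gen W).

Definition relators_in : seq A :=
  [:: lie_br (g iZ1) (g iZ2);
      lie_br (g iZ11) (g iZ2);
      lie_br (g iZ1) (g iZ22);
      lie_br (g iZ11) (g iZ22) - lie_br (g iZ22) (g iZ12);
      lie_br (g iZ11) (g iZ12) + lie_br (g iZ22) (g iZ12);
      lie_br (g iZ22) (g iZ12) + lie_br (g iZ1 - g iZ2) (g iZ12)].

Local Notation J := (ideal_gen relators_in).

Lemma relators_in_ideal :
  J (lie_br (g iZ1) (g iZ2)) /\ J (lie_br (g iZ11) (g iZ2)) /\ J (lie_br (g iZ1) (g iZ22)) /\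
  J (lie_br (g iZ11) (g iZ22) - lie_br (g iZ22) (g iZ12)) /\
  J (lie_br (g iZ11) (g iZ12) + lie_br (g iZ22) (g iZ12)) /\
  J (lie_br (g iZ22) (g iZ12) + lie_br (g iZ1 - g iZ2) (g iZ12)).
Proof.
do !split; apply: ideal_gen_relator; by rewrite !inE eqxx ?orbT.
Qed.

Lemma forall_relators (P : A -> Prop) :
  P (lie_br (g iZ1) (g iZ2)) -> P (lie_br (g iZ11) (g iZ2)) -> P (lie_br (g iZ1) (g iZ22)) ->
  P (lie_br (g iZ11) (g iZ22) - lie_br (g iZ22) (g iZ12)) ->
  P (lie_br (g iZ11) (g iZ12) + lie_br (g iZ22) (g iZ12)) ->
  P (lie_br (g iZ22) (g iZ12) + lie_br (g iZ1 - g iZ2) (g iZ12)) ->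
  forall r, r \in relators_in -> P r.
Proof.
move=> P1 P2 P3 P4 P5 P6 r; rewrite !inE.
by do ![case/orP => [/eqP -> //|]]; move/eqP ->.
Qed.

(* [Z_b, Z_a] for b in B, a in A, as read off from the defining relations *)
Definition delta12 (b a : 'I_5) : A :=
  match nat_of_ord b, nat_of_ord a with
  | 2, 4 => lie_br (g iZ1) (g iZ12) - lie_br (g iZ11) (g iZ12)
  | 3, 1 => lie_br (g iZ11) (g iZ12)
  | 3, 4 => - lie_br (g iZ11) (g iZ12)
  | _, _ => 0
  end.

Definition delta21 (b a : 'I_5) : A :=
  match nat_of_ord b, nat_of_ord a with
  | 0, 4 => lie_br (g iZ2) (g iZ12) - lie_br (g iZ22) (g iZ12)
  | 1, 3 => lie_br (g iZ22) (g iZ12)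
  | 1, 4 => - lie_br (g iZ22) (g iZ12)
  | _, _ => 0
  end.

Section Case12.
Local Notation A1 := (genSet 1 1 2).
Local Notation B1 := (genSet 2 1 2).

Lemma case12_gens : [/\ A1 iZ1, A1 iZ11, A1 iZ12, B1 iZ2 & B1 iZ22].
Proof. by split; rewrite /= !inE eqxx ?orbT. Qed.

Lemma delta12_lie a b : A1 a -> B1 b -> lie_gen g A1 (delta12 b a).
Proof.
have [A_1 A_11 A_12 _ _] := case12_gens.
have [g1 g11 g12] : [/\ lie_gen g A1 (g iZ1), lie_gen g A1 (g iZ11) & lie_gen g A1 (g iZ12)].
  by split; apply: lie_gen_gen.
rewrite /= !inE => /or3P [] /eqP -> /orP [] /eqP ->; rewrite /delta12 !iZ_val /=;
  by [apply: lie_gen0 | apply: lie_genB; apply: lie_gen_br | apply: lie_gen_br |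
      apply/lie_genN/lie_gen_br].
Qed.

Lemma br12 a b : A1 a -> B1 b -> eq_mod relators_in (lie_br (g b) (g a)) (delta12 b a).
Proof.
have [R1 [R2 [R3 [R4 [R5 R6]]]]] := relators_in_ideal.
rewrite /= !inE => /or3P [] /eqP -> /orP [] /eqP ->; rewrite /delta12 !iZ_val /= /eq_mod.
1: apply: ideal_gen_eq (ideal_genN R1) _.
2: apply: ideal_gen_eq (ideal_genN R3) _.
3: apply: ideal_gen_eq (ideal_genN R2) _.
4: apply: ideal_gen_eq (ideal_genN (ideal_genD R4 R5)) _.
5: apply: ideal_gen_eq (ideal_genB R5 R6) _.
6: apply: ideal_gen_eq R5 _.
all: by rewrite /lie_br ?subr0 ?(mulrBl, mulrBr); cancel_terms.
Qed.

Lemma rep12_relators :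
  forall r, r \in relators_in -> forall v, rep W lift A1 B1 delta12 r v = 0.
Proof.
have [A_1 A_11 A_12 B_2 B_22] := case12_gens.
have inBE := genSet_compl.1.
have AB := rep_br_AB W_cat W_ind liftW inBE; have BA := rep_br_BA W_cat W_ind liftW inBE.
have AA := rep_br_AA W_cat W_ind liftW.
apply: forall_relators => v.
- by rewrite AB // /delta12 !iZ_val mul0r oppr0.
- by rewrite AB // /delta12 !iZ_val mul0r oppr0.
- by rewrite AB // /delta12 !iZ_val mul0r oppr0.
- by rewrite repB AB // BA // /delta12 !iZ_val /= mulNr opprK addNr.
- by rewrite repD AA // BA // /delta12 !iZ_val /= mulNr addrN.
rewrite repD BA // lie_brBl repB AA // BA // /delta12 !iZ_val /=.
by rewrite /lie_br !(mulNr, mulrBl); cancel_terms.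
Qed.
End Case12.

Section Case21.
Local Notation A2 := (genSet 2 2 1).
Local Notation B2 := (genSet 1 2 1).

Lemma case21_gens : [/\ A2 iZ2, A2 iZ22, A2 iZ12, B2 iZ1 & B2 iZ11].
Proof. by split; rewrite /= !inE eqxx ?orbT. Qed.

Lemma delta21_lie a b : A2 a -> B2 b -> lie_gen g A2 (delta21 b a).
Proof.
have [A_2 A_22 A_12 _ _] := case21_gens.
have [g2 g22 g12] : [/\ lie_gen g A2 (g iZ2), lie_gen g A2 (g iZ22) & lie_gen g A2 (g iZ12)].
  by split; apply: lie_gen_gen.
rewrite /= !inE => /or3P [] /eqP -> /orP [] /eqP ->; rewrite /delta21 !iZ_val /=;
  by [apply: lie_gen0 | apply: lie_genB; apply: lie_gen_br | apply: lie_gen_br |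
      apply/lie_genN/lie_gen_br].
Qed.

Lemma br21 a b : A2 a -> B2 b -> eq_mod relators_in (lie_br (g b) (g a)) (delta21 b a).
Proof.
have [R1 [R2 [R3 [R4 [R5 R6]]]]] := relators_in_ideal.
rewrite /= !inE => /or3P [] /eqP -> /orP [] /eqP ->; rewrite /delta21 !iZ_val /= /eq_mod.
1: apply: ideal_gen_eq R1 _.
2: apply: ideal_gen_eq R2 _.
3: apply: ideal_gen_eq R3 _.
4: apply: ideal_gen_eq R4 _.
5: apply: ideal_gen_eq R6 _.
6: apply: ideal_gen_eq R5 _.
all: by rewrite /lie_br ?subr0 ?(mulrBl, mulrBr); cancel_terms.
Qed.

Lemma rep21_relators :
  forall r, r \in relators_in -> forall v, rep W lift A2 B2 delta21 r v = 0.
Proof.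
have [A_2 A_22 A_12 B_1 B_11] := case21_gens.
have inBE := genSet_compl.2.
have BA := rep_br_BA W_cat W_ind liftW inBE; have AA := rep_br_AA W_cat W_ind liftW.
apply: forall_relators => v.
- by rewrite BA // /delta21 !iZ_val mul0r.
- by rewrite BA // /delta21 !iZ_val mul0r.
- by rewrite BA // /delta21 !iZ_val mul0r.
- by rewrite repB BA // AA // /delta21 !iZ_val /= subrr.
- by rewrite repD BA // AA // /delta21 !iZ_val /= mulNr addNr.
rewrite repD AA // lie_brBl repB BA // AA // /delta21 !iZ_val /=.
by rewrite /lie_br !(mulNr, mulrBl); cancel_terms.
Qed.
End Case21.

Theorem splitting12 : enveloping_splits W relators_in (genSet 1 1 2) (genSet 2 1 2).
Proof.
exact: (enveloping_splitting W_cat W_nil W_ind liftW coordW genSet_compl.1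
          delta12_lie br12 rep12_relators).
Qed.

Theorem splitting21 : enveloping_splits W relators_in (genSet 2 2 1) (genSet 1 2 1).
Proof.
exact: (enveloping_splitting W_cat W_nil W_ind liftW coordW genSet_compl.2
          delta21_lie br21 rep21_relators).
Qed.
End Cases.

Implicit Types (x y : FreeAlg) (u w : seq 'I_5) (c : CC).

Lemma word_cat u w : word (u ++ w) = word u * word w.
Proof.
by rewrite /word malgM_def fgmulUU mulr1; congr << _ *g _ >>; apply: val_inj; rewrite /= fmM.
Qed.

Lemma word_nil : word [::] = 1.
Proof. by rewrite /word; congr << _ *g _ >>; apply: val_inj; rewrite /= fm1. Qed.

Lemma malgU_word c (k : {fmonom 'I_5}) : << c *g k >> = c *: word k :> FreeAlg.
Proof. by rewrite /word fmK -mul_malgC malgM_def fgmulUU mulr1 mul1m. Qed.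

Lemma freeAlg_ind (P : FreeAlg -> Prop) :
  P 0 -> (forall x y, P x -> P y -> P (x + y)) -> (forall c w, P (c *: word w)) ->
  forall x, P x.
Proof.
move=> P0 PD PW x; rewrite (monalgE x); apply: big_ind => // k _.
by rewrite malgU_word; apply: PW.
Qed.

Lemma scalerAr_free c x y : c *: (x * y) = x * (c *: y).
Proof.
have central : x * c%:MP = c%:MP * x.
  by rewrite !malgM_def fgmulgU fgmulUg; apply: eq_bigr => k _; rewrite mulrC mulm1 mul1m.
rewrite -!mul_malgC mulrA -central [RHS]mulrA; reflexivity.
Qed.

Definition coeff w (x : FreeAlg) : CC := x@_(FMonom w).

Lemma coeff_is_scalar w : scalar (coeff w).
Proof. by move=> c x y; rewrite /coeff mcoeffD mcoeffZ. Qed.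

HB.instance Definition _ w :=
  GRing.isLinear.Build CC FreeAlg CC *%R (coeff w) (coeff_is_scalar w).

Lemma coeff_word w w' : coeff w (word w') = (w' == w)%:R.
Proof. by rewrite /coeff mcoeffU1; congr (_ %:R); apply/eqP/eqP => [[]|->]. Qed.

Definition lift (h : seq 'I_5 -> FreeAlg) : FreeAlg -> FreeAlg :=
  mmap (@malgC _ CC) (fun k : {fmonom 'I_5} => h k).

Lemma liftD h x y : lift h (x + y) = lift h x + lift h y.
Proof. exact: mmapD. Qed.

Lemma lift_scale_word h c w : lift h (c *: word w) = c *: h w.
Proof. by rewrite -[c *: _](malgU_word c (FMonom w)) /lift mmapU /= mul_malgC. Qed.

Lemma lift_is_linear h : linear (lift h).
Proof.
move=> c x y; rewrite liftD; congr (_ + _).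
exact: (scalable_on_span freeAlg_ind (lift_scale_word h)).
Qed.

HB.instance Definition _ h :=
  GRing.isLinear.Build CC FreeAlg FreeAlg *:%R (lift h) (lift_is_linear h).

Lemma liftW h w : lift h (word w) = h w.
Proof. by rewrite -[word w]scale1r lift_scale_word scale1r. Qed.

HB.instance Definition _ := GRing.Lalgebra.on FreeAlg.
HB.instance Definition _ := GRing.Lalgebra_isAlgebra.Build CC FreeAlg scalerAr_free.

Lemma relIdealE x : relIdeal x <-> ideal_gen (relators_in word) x.
Proof.
split; elim=> [r a b rel_r | | y z _ Iy _ Iz | c y _ Iy].
- exact: ideal_gen_rel rel_r.
- exact: ideal_gen0.
- exact: ideal_genD Iy Iz.
- exact: ideal_genZ Iy.
- exact: relIdeal_gen rel_r.
- exact: relIdeal_0.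
- exact: relIdeal_add Iy Iz.
- exact: relIdeal_scale Iy.
Qed.

Lemma eqUE x y : eqU x y <-> eq_mod (relators_in word) x y.
Proof. exact: relIdealE. Qed.

Lemma lieGenE S x : lieGen S x <-> lie_gen (gen word) S x.
Proof.
split; elim=> [i Si | | y z _ Ly _ Lz | c y _ Ly | y z _ Ly _ Lz].
- exact: lie_gen_gen Si.
- exact: lie_gen0.
- exact: lie_genD Ly Lz.
- exact: lie_genZ Ly.
- exact: lie_gen_br Ly Lz.
- exact: lieGen_gen Si.
- exact: lieGen_0.
- exact: lieGen_add Ly Lz.
- exact: lieGen_scale Ly.
- exact: lieGen_br Ly Lz.
Qed.

Lemma inLieE S x : inLie S x <-> in_lie (relators_in word) (gen word) S x.
Proof. by split=> -[y [/lieGenE Sy /eqUE Exy]]; exists y; split=> //; apply/lieGenE. Qed.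

Unset Implicit Arguments.

Theorem proposition4p1 (i1 i2 : nat) :
  ((i1 == 1%N) && (i2 == 2%N)) || ((i1 == 2%N) && (i2 == 1%N)) ->
  let A := genSet i1 i1 i2 in
  let B := genSet i2 i1 i2 in
  (forall x y, inLie A x -> inLie B y -> inLie A (br x y)) /\
  ((forall x, inLie predT x ->
      exists a b, inLie A a /\ inLie B b /\ eqU x (a + b)) /\
   (forall x, inLie A x -> inLie B x -> eqU x 0)) /\
  (forall u : FreeAlg,
      exists s : seq (CC * (seq 'I_5 * seq 'I_5)),
        all (fun t => isWord A t.2.1 && isWord B t.2.2) s /\
        eqU u (\sum_(t <- s) t.1 *: (word t.2.1 * word t.2.2))) /\
  (forall (s : seq (seq 'I_5 * seq 'I_5)) (c : seq 'I_5 * seq 'I_5 -> CC),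
      uniq s ->
      all (fun p => isWord A p.1 && isWord B p.2) s ->
      eqU (\sum_(p <- s) c p *: (word p.1 * word p.2)) 0 ->
      forall p, p \in s -> c p = 0).
Proof.
move=> i12 A B.
have [ideal decomp direct span free] : enveloping_splits word (relators_in word) A B.
  rewrite /A /B.
  case/orP: i12 => /andP [/eqP -> /eqP ->].
    exact: (splitting12 word_cat word_nil freeAlg_ind liftW coeff_word).
  exact: (splitting21 word_cat word_nil freeAlg_ind liftW coeff_word).
split; [|split; [split|split]].
- by move=> x y /inLieE Ax /inLieE By; apply/inLieE; apply: ideal.
- move=> x /inLieE /decomp [a [b [Aa Bb Exab]]].
  by exists a, b; rewrite !inLieE eqUE.
- by move=> x /inLieE Ax /inLieE Bx; apply/eqUE; apply: direct.
- by move=> u; have [s [Ns Eu]] := span u; exists s; split=> //; apply/eqUE.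
- by move=> s c Us Ns /eqUE; apply: free.
Qed.
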